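(* Write $P_{a/b}(u,v,w)=\sum_{k\ge0}S_k(v,w)u^k$. Then: (1) for every integer $n\ge1$, for $P_{1/n}$ one has $S_1(v,w)=\sum_{k=1}^{n}k\,v^{k-1}w^{n-k}$; (2) for every integer $n\ge2$, for $P_{2/(2n-1)}$ one has $S_1(v,w)=2n\,v^{2n-1}+\sum_{k=1}^{n-1}4k\,v^{n+k-1}w^{n-k}$. Equivalently, in terms of the Markov polynomials, the coefficient polynomial $S_1(y^2,z^2)$ multiplies $x^{3-a}/(y^{b-1}z^{a+b-1})$ in the expansion of $M_{a/b}$ in powers of $x$.
   Context: Markov polynomials. Let $x,y,z$ be indeterminates. Consider the set consisting of all rationals $\rho\in[0,1]$, each written in lowest terms $\rho=a/b$ with integers $a\ge 0$, $b\ge 1$, together with the formal symbol $1/0$. Define Laurent polynomials $M_\rho(x,y,z)$ recursively by $M_{1/0}=y$, $M_{0/1}=x$, $M_{1/1}=\frac{x^2+y^2}{z}$, and: whenever $a/b$, $c/d$ are in this set with $|ad-bc|=1$ and $(a+2c)/(b+2d)\in[0,1]$, then $M_{\frac{a+2c}{b+2d}}=\big(M_{c/d}^2+M_{\frac{a+c}{b+d}}^2\big)/M_{a/b}$. This determines $M_\rho$ for every rational $\rho\in[0,1]$. Numerator. For coprime $1\le a\le b$, $P_{a/b}(u,v,w)$ denotes the homogeneous polynomial of degree $a+b-1$ such that $M_{a/b}(x,y,z)=P_{a/b}(x^2,y^2,z^2)/(x^{a-1}y^{b-1}z^{a+b-1})$; its existence is known. *)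

From HB Require Import structures.
From mathcomp Require Import all_boot all_order all_algebra.
From mathcomp Require Import fraction.
From mathcomp Require Import mpoly.
Set Implicit Arguments. Unset Strict Implicit. Unset Printing Implicit Defensive.
Import Order.TTheory GRing.Theory Num.Theory.
Local Open Scope ring_scope.

Notation Poly3 := {mpoly int[3]}.
(* Rational functions in x, y, z (Laurent polynomials live here). *)
Notation RF3 := {fraction Poly3}.
Notation "p %:F" := (@FracField.tofrac _ p) : ring_scope.

Definition i0 : 'I_3 := @Ordinal 3 0 isT.
Definition i1 : 'I_3 := @Ordinal 3 1 isT.
Definition i2 : 'I_3 := @Ordinal 3 2 isT.

Definition xF : RF3 := ('X_i0 : Poly3)%:F.
Definition yF : RF3 := ('X_i1 : Poly3)%:F.
Definition zF : RF3 := ('X_i2 : Poly3)%:F.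

(* The index set: the pair (a,b) of naturals stands for the rational a/b
   in lowest terms with 0 <= a/b <= 1 (b >= 1), or for the formal 1/0. *)
Definition in_index (a b : nat) : bool :=
  coprime a b && ((a <= b)%N || ((a == 1%N) && (b == 0%N))).

(* M : nat -> nat -> RF3, M a b standing for M_{a/b}, satisfies the
   defining recursion of the Markov polynomials. *)
Definition markov_family (M : nat -> nat -> RF3) : Prop :=
  [/\ M 1%N 0%N = yF,
      M 0%N 1%N = xF,
      M 1%N 1%N = (xF ^+ 2 + yF ^+ 2) / zF &
      forall a b c d : nat,
        in_index a b -> in_index c d ->
        `|(a * d)%:Z - (b * c)%:Z| = 1 ->
        (a + 2 * c <= b + 2 * d)%N ->
        M (a + 2 * c)%N (b + 2 * d)%N
          = (M c d ^+ 2 + M (a + c)%N (b + d)%N ^+ 2) / M a b].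

Definition markov_numerator (M : nat -> nat -> RF3) (a b : nat) (P : Poly3)
  : Prop :=
  P \is (a + b - 1)%N.-homog /\
  M a b = (P \mPo [tuple 'X_i0 ^+ 2; 'X_i1 ^+ 2; 'X_i2 ^+ 2] : Poly3)%:F
          / ((('X_i0 : Poly3) ^+ (a - 1) * 'X_i1 ^+ (b - 1)
              * 'X_i2 ^+ (a + b - 1))%:F).

(* Writing P(u,v,w) = sum_k S_k(v,w) u^k (u = variable 0), this is the
   term S_k(v,w) u^k of P. *)
Definition uterm (k : nat) (P : Poly3) : Poly3 :=
  \sum_(m <- msupp P | m i0 == k) P@_m *: 'X_[m].

(* Put P_0 = 1, P_1 = u + v and P_(n+2) = (u + v + w) P_(n+1) - v w P_n.  The
   Cassini identity P_(n+2) P_n - P_(n+1)^2 = u w (v w)^n is exactly what the Markov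
   recursion through 1/n, 0/1, 1/(n+1) needs, so M_(1/n) = y P_n(x^2,y^2,z^2) / (y z)^n
   and P_(1/n) = P_n.  The recursion through 0/1, 1/(n-1), 1/n then gives
   M_(2/(2n-1)) = (M_(1/(n-1))^2 + M_(1/n)^2) / x, whence P_(2/(2n-1)) = v w P_(n-1)^2 + P_n^2.
   Finally S_1 u = u (d P/d u)(0, v, w).  At u = 0 we have P_n = v^n, and
   D_n = (d P_n/d u)(0, v, w) satisfies D_(n+1) = w D_n + (n+1) v^n, which the sum in (1)
   solves; (2) follows by the product rule. *)

From HB Require Import structures.
From mathcomp Require Import all_boot all_order all_algebra.
From mathcomp Require Import fraction mpoly.
From mathcomp Require Import ring zify.

Set Implicit Arguments.
Unset Strict Implicit.
Unset Printing Implicit Defensive.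

Import Order.TTheory GRing.Theory Num.Theory.
Local Open Scope ring_scope.

Section MPolySubstitutions.
Variables (R : comNzRingType) (n : nat).
Implicit Types (p q : {mpoly R[n]}) (m : 'X_{1..n}).

Lemma mcoeff_msupp_filter p (P : pred 'X_{1..n}) m :
  (\sum_(m' <- msupp p | P m') p@_m' *: 'X_[m'])@_m = if P m then p@_m else 0.
Proof.
rewrite raddf_sum /= big_mkcond /=.
case: ifP => Pm; last first.
  apply: big1 => m' _; case: ifP => // Pm'.
  rewrite mcoeffZ mcoeffX mulr_natr; case: eqP => // e.
  by rewrite e Pm in Pm'.
rewrite [in RHS](mpolyE p) raddf_sum /=; apply: eq_bigr => m' _.
rewrite mcoeffZ mcoeffX mulr_natr; case: eqP => [->|_]; first by rewrite Pm.
by case: ifP.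
Qed.

Lemma mpolyX_neq0 m : 'X_[m] != 0 :> {mpoly R[n]}.
Proof.
by apply/eqP => /(congr1 (mcoeff m)); rewrite mcoeffX eqxx mcoeff0; apply/eqP/oner_neq0.
Qed.

Definition sq_vars : n.-tuple {mpoly R[n]} := [tuple 'X_i ^+ 2 | i < n].

Lemma comp_sq_vars_X i : 'X_i \mPo sq_vars = 'X_i ^+ 2.
Proof. by rewrite comp_mpolyXU -tnth_nth tnth_mktuple. Qed.

Lemma comp_sq_vars_mpolyX m : 'X_[m] \mPo sq_vars = 'X_[m *+ 2].
Proof.
rewrite comp_mpolyX -mpolyXn mpolyXE_id -prodrXl.
by apply: eq_bigr => i _; rewrite tnth_mktuple -!exprM mulnC.
Qed.

Lemma mcoeff_comp_sq_vars p m : (p \mPo sq_vars)@_(m *+ 2) = p@_m.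
Proof.
rewrite comp_mpolyEX raddf_sum [in RHS](mpolyE p) raddf_sum /=.
apply: eq_bigr => m' _; rewrite !mcoeffZ comp_sq_vars_mpolyX !mcoeffX.
suff -> : (m' *+ 2 == m *+ 2)%MM = (m' == m) by [].
apply/eqP/eqP => [e|-> //]; apply/mnmP => i.
by have := congr1 (fun m'' : 'X_{1..n} => m'' i) e; rewrite /= !mulmnE; lia.
Qed.

Lemma comp_sq_vars_inj : injective (comp_mpoly sq_vars).
Proof.
by move=> p q e; apply/mpolyP => m; rewrite -mcoeff_comp_sq_vars e mcoeff_comp_sq_vars.
Qed.

Variable j : 'I_n.

Definition zero_var : n.-tuple {mpoly R[n]} := [tuple if i == j then 0 else 'X_i | i < n].

Lemma comp_zero_var_X i : 'X_i \mPo zero_var = if i == j then 0 else 'X_i.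
Proof. by rewrite comp_mpolyXU -tnth_nth tnth_mktuple. Qed.

Lemma mderiv_mpolyXU i : 'X_i^`M(j) = (i == j)%:R :> {mpoly R[n]}.
Proof.
rewrite mderivX mnm1E; case: eqP => [->|_]; last by rewrite scale0r.
by rewrite scale1r -[X in (X - _)%MM]add0m addmK mpolyX0.
Qed.

Lemma mderivM_comp_zero_var p q :
  (p * q)^`M(j) \mPo zero_var
  = (p^`M(j) \mPo zero_var) * (q \mPo zero_var) + (p \mPo zero_var) * (q^`M(j) \mPo zero_var).
Proof. by rewrite mderivM rmorphD !rmorphM. Qed.

Lemma comp_zero_var_mpolyX m :
  'X_[m] \mPo zero_var = if m j == 0%N then 'X_[m] else 0.
Proof.
rewrite comp_mpolyX mpolyXE_id (bigD1 j) //= [X in _ = if _ then X else _](bigD1 j) //=.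
rewrite tnth_mktuple eqxx.
case: eqP => [->|/eqP mj]; last by rewrite expr0n (negbTE mj) mul0r.
rewrite !expr0 !mul1r; apply: eq_bigr => i /negbTE ij.
by rewrite tnth_mktuple ij.
Qed.

Lemma mcoeff_comp_zero_var p m :
  (p \mPo zero_var)@_m = if m j == 0%N then p@_m else 0.
Proof.
rewrite -(mcoeff_msupp_filter p (fun m' => m' j == 0%N)) comp_mpolyEX [in RHS]big_mkcond /=.
congr (mcoeff _ _); apply: eq_bigr => m' _.
by rewrite comp_zero_var_mpolyX; case: ifP; rewrite ?linear0.
Qed.

Lemma mcoeff_mulX p m :
  ('X_j * p)@_m = if (0 < m j)%N then p@_(m - U_(j))%MM else 0.
Proof.
case: ifP => mj.
  have -> : m = (U_(j) + (m - U_(j)))%MM by rewrite addmC submK // lep1mP -lt0n.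
  by rewrite mulrC mcoeffMX addmC addmK.
apply: memN_msupp_eq0; rewrite mulrC (perm_mem (msuppMX _ _)).
by apply/mapP => -[m' _ e]; move: mj; rewrite e mnmDE mnm1E eqxx; lia.
Qed.

Lemma mcoeff_mulX_mderiv_zero_var p m :
  ('X_j * (p^`M(j) \mPo zero_var))@_m = if m j == 1%N then p@_m else 0.
Proof.
rewrite mcoeff_mulX mcoeff_comp_zero_var mcoeff_mderiv mnmBE mnm1E eqxx.
case: (eqVneq (m j) 1%N) => [mj|mj]; last first.
  by case: ifP => // mj0; case: ifP => //; move: mj mj0; lia.
by rewrite mj subnn mulr1n submK // lep1mP mj.
Qed.

End MPolySubstitutions.

Arguments sq_vars {R n}.
Arguments zero_var {R n} j.

Lemma linrec_cassini (R : comPzRingType) (s q : R) (a : nat -> R) :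
    (forall n, a n.+2 = s * a n.+1 - q * a n) ->
  forall n, a n.+2 * a n - a n.+1 ^+ 2 = q ^+ n * (a 2%N * a 0%N - a 1%N ^+ 2).
Proof.
move=> rec; elim=> [|n IHn]; first by rewrite expr0 mul1r.
by rewrite (exprS q n) -mulrA -IHn (rec n.+1) (rec n); ring.
Qed.

Local Notation u := ('X_i0 : Poly3).
Local Notation v := ('X_i1 : Poly3).
Local Notation w := ('X_i2 : Poly3).
Local Notation at_u0 p := (p \mPo zero_var i0).
Local Notation du_at_u0 p := (p^`M(i0) \mPo zero_var i0).

Lemma uterm1_mderiv p : uterm 1 p = u * du_at_u0 p.
Proof. by apply/mpolyP => m; rewrite mcoeff_mulX_mderiv_zero_var mcoeff_msupp_filter. Qed.

Fixpoint markovP (n : nat) : Poly3 :=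
  match n with
  | 0 => 1
  | 1 => u + v
  | (n'.+1 as n1).+1 => (u + v + w) * markovP n1 - v * w * markovP n'
  end.
Arguments markovP : simpl nomatch.

Lemma markovP_SS n :
  markovP n.+2 = (u + v + w) * markovP n.+1 - v * w * markovP n.
Proof. by []. Qed.

Lemma markovP_cassini n :
  markovP n.+2 * markovP n - markovP n.+1 ^+ 2 = u * w * (v * w) ^+ n.
Proof. by rewrite (linrec_cassini markovP_SS) /=; ring. Qed.

Lemma at_u0_u : at_u0 u = 0. Proof. by rewrite comp_zero_var_X eqxx. Qed.
Lemma at_u0_v : at_u0 v = v. Proof. by rewrite comp_zero_var_X. Qed.
Lemma at_u0_w : at_u0 w = w. Proof. by rewrite comp_zero_var_X. Qed.

Lemma markovP_at_u0 n : at_u0 (markovP n) = v ^+ n.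
Proof.
suff : at_u0 (markovP n) = v ^+ n /\ at_u0 (markovP n.+1) = v ^+ n.+1 by case.
elim: n => [|n [IHn IHn1]].
  by rewrite /= rmorphD rmorph1 /= at_u0_u at_u0_v add0r.
split=> //; rewrite markovP_SS rmorphB !rmorphM !rmorphD /= IHn IHn1.
by rewrite at_u0_u at_u0_v at_u0_w !exprS; ring.
Qed.

Lemma markovP_neq0 n : markovP n != 0.
Proof.
apply: contra_eqN (markovP_at_u0 n) => /eqP ->.
by rewrite rmorph0 eq_sym expf_neq0 // mpolyX_neq0.
Qed.

Definition S1_1n (n : nat) : Poly3 :=
  \sum_(1 <= k < n.+1) (k%:R : int) *: (v ^+ (k - 1) * w ^+ (n - k)).

Lemma S1_1nS n : S1_1n n.+1 = w * S1_1n n + v ^+ n *+ n.+1.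
Proof.
rewrite /S1_1n big_nat_recr //= subnn expr0 mulr1 subn1 /= scaler_nat.
congr (_ + _); rewrite mulr_sumr; apply: eq_big_nat => k /andP [k_gt0 k_le_n].
by rewrite subSn -1?ltnS // exprS -scalerAr mulrCA.
Qed.

Lemma du_at_u0_u : du_at_u0 u = 1. Proof. by rewrite mderiv_mpolyXU eqxx rmorph1. Qed.
Lemma du_at_u0_v : du_at_u0 v = 0. Proof. by rewrite mderiv_mpolyXU rmorph0. Qed.
Lemma du_at_u0_w : du_at_u0 w = 0. Proof. by rewrite mderiv_mpolyXU rmorph0. Qed.

Lemma markovP_du_at_u0 n : du_at_u0 (markovP n) = S1_1n n.
Proof.
suff : du_at_u0 (markovP n) = S1_1n n /\ du_at_u0 (markovP n.+1) = S1_1n n.+1 by case.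
elim: n => [|n [IHn IHn1]].
  rewrite /S1_1n big_geq // big_nat1 /= mderivD !mderiv_mpolyXU eqxx.
  by rewrite mderivC rmorph0 !rmorphD !rmorph1 rmorph0 /= addr0 mulr1 scale1r.
split=> //; rewrite markovP_SS mderivB rmorphB /= !mderivM_comp_zero_var.
rewrite !mderivD !rmorphD /= du_at_u0_u du_at_u0_v du_at_u0_w !rmorphM /= at_u0_u at_u0_v at_u0_w.
rewrite !markovP_at_u0 IHn IHn1.
by rewrite !S1_1nS !exprS; ring.
Qed.

Lemma uterm1_markovP n : uterm 1 (markovP n) = u * S1_1n n.
Proof. by rewrite uterm1_mderiv markovP_du_at_u0. Qed.

Definition S1_2n (n : nat) : Poly3 :=
  ((2 * n)%N%:R : int) *: v ^+ (2 * n - 1)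
  + \sum_(1 <= k < n) ((4 * k)%N%:R : int) *: (v ^+ (n + k - 1) * w ^+ (n - k)).

Lemma S1_2nS d : S1_2n d.+1 = v ^+ (d + d).+1 *+ (2 * d.+1) + v ^+ d.+1 * w * S1_1n d *+ 4.
Proof.
rewrite /S1_2n /S1_1n scaler_nat (_ : 2 * d.+1 - 1 = (d + d).+1)%N; last by lia.
congr (_ + _); rewrite mulr_sumr -sumrMnl; apply: eq_big_nat => k /andP [k_gt0 k_le_d].
rewrite !scaler_nat (_ : d.+1 + k - 1 = d.+1 + (k - 1))%N; last by lia.
rewrite (_ : d.+1 - k = (d - k).+1)%N; last by lia.
rewrite exprD (exprS w) mulrnA.
by move: (v ^+ d.+1) (v ^+ (k - 1)) (w ^+ (d - k)) w => a b c e; ring.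
Qed.

Lemma uterm1_markov2 n : (1 <= n)%N ->
  uterm 1 (v * w * markovP n.-1 ^+ 2 + markovP n ^+ 2) = u * S1_2n n.
Proof.
case: n => // d _ /=; rewrite uterm1_mderiv mderivD rmorphD /= !expr2.
rewrite !mderivM_comp_zero_var du_at_u0_v du_at_u0_w !rmorphM /= at_u0_v at_u0_w.
rewrite !markovP_at_u0 !markovP_du_at_u0 S1_2nS S1_1nS.
rewrite [v ^+ (d + d).+1]exprS [v ^+ (d + d)]exprD [v ^+ d.+1]exprS.
by move: (v ^+ d) (S1_1n d) => V S; ring.
Qed.

Lemma sq_vars3 : sq_vars = [tuple 'X_i0 ^+ 2; 'X_i1 ^+ 2; 'X_i2 ^+ 2] :> 3.-tuple Poly3.
Proof.
apply: eq_from_tnth => -[[|[|[|//]]] lti]; rewrite tnth_mktuple /=;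
  by congr (_ ^+ 2); congr 'X__; apply: val_inj.
Qed.

Definition frac_sq : Poly3 -> RF3 := @FracField.tofrac _ \o comp_mpoly sq_vars.
HB.instance Definition _ := GRing.RMorphism.on frac_sq.
Arguments frac_sq : simpl never.

Lemma frac_sq_X i : frac_sq 'X_i = ('X_i : Poly3)%:F ^+ 2.
Proof. by rewrite /frac_sq /= comp_sq_vars_X tofracXn. Qed.

Lemma frac_sq_u : frac_sq u = xF ^+ 2. Proof. exact: frac_sq_X. Qed.
Lemma frac_sq_v : frac_sq v = yF ^+ 2. Proof. exact: frac_sq_X. Qed.
Lemma frac_sq_w : frac_sq w = zF ^+ 2. Proof. exact: frac_sq_X. Qed.

Lemma xF_neq0 : xF != 0. Proof. by rewrite tofrac_eq0 mpolyX_neq0. Qed.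
Lemma yF_neq0 : yF != 0. Proof. by rewrite tofrac_eq0 mpolyX_neq0. Qed.
Lemma zF_neq0 : zF != 0. Proof. by rewrite tofrac_eq0 mpolyX_neq0. Qed.

Lemma frac_sq_inj : injective frac_sq.
Proof. by move=> p q /eqP; rewrite /frac_sq /= tofrac_eq => /eqP /comp_sq_vars_inj. Qed.

Lemma frac_sq_neq0 p : p != 0 -> frac_sq p != 0.
Proof. by rewrite -(rmorph0 frac_sq) (inj_eq frac_sq_inj). Qed.

Lemma frac_sq_markovP_cassini n :
  frac_sq (markovP n.+2) * frac_sq (markovP n) - frac_sq (markovP n.+1) ^+ 2
  = (xF * zF * (yF * zF) ^+ n) ^+ 2.
Proof.
rewrite -rmorphXn -!rmorphM -rmorphB markovP_cassini !rmorphM !rmorphXn /=.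
by rewrite rmorphM /= frac_sq_u frac_sq_v frac_sq_w -!exprMn exprAC -exprMn.
Qed.

Lemma cassini_frac_step (K : fieldType) (x y z t a b c : K) :
    y != 0 -> z != 0 -> t != 0 -> a != 0 -> c * a - b ^+ 2 = (x * z * t) ^+ 2 ->
  (x ^+ 2 + (b * y / (t * (y * z))) ^+ 2) / (a * y / t) = c * y / (t * (y * z) * (y * z)).
Proof.
move=> y0 z0 t0 a0 cassini.
have -> : c = (b ^+ 2 + (x * z * t) ^+ 2) / a by rewrite -cassini addrC subrK mulfK.
by field; rewrite y0 z0 t0 a0.
Qed.

(* The extra factor [yF] makes the formula cover M_(1/0) = y as well. *)
Lemma markov_1n M : markov_family M ->
  forall n, M 1%N n = frac_sq (markovP n) * yF / (yF * zF) ^+ n.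
Proof.
case=> M10 M01 M11 Mrec n.
suff : M 1%N n = frac_sq (markovP n) * yF / (yF * zF) ^+ n
    /\ M 1%N n.+1 = frac_sq (markovP n.+1) * yF / (yF * zF) ^+ n.+1 by case.
elim: n => [|n [IHn IHn1]].
  rewrite M10 M11 rmorph1 mul1r expr0 divr1 expr1 /= rmorphD /= frac_sq_u frac_sq_v; split=> //.
  by rewrite invfM mulrA mulfK // yF_neq0.
split=> //.
have -> : M 1%N n.+2 = (M 0%N 1%N ^+ 2 + M 1%N n.+1 ^+ 2) / M 1%N n.
  have := Mrec 1%N n 0%N 1%N; rewrite !muln0 !muln1 addn0 addn2 addn1; apply=> //.
  by rewrite /in_index coprime1n; case: n {IHn IHn1}.
rewrite M01 IHn IHn1 !(exprSr (yF * zF)); apply: cassini_frac_step.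
- exact: yF_neq0.
- exact: zF_neq0.
- exact: expf_neq0 (mulf_neq0 yF_neq0 zF_neq0).
- exact/frac_sq_neq0/markovP_neq0.
- exact: frac_sq_markovP_cassini.
Qed.

Lemma div_expS_1n (K : fieldType) (y z : K) n :
  y != 0 -> y / (y * z) ^+ n.+1 = (y ^+ n * z ^+ n.+1)^-1.
Proof. by move=> y0; rewrite exprMn exprS -mulrA invfM mulrA divff // mul1r. Qed.

Lemma markov_numerator_1n M n P : markov_family M -> (1 <= n)%N ->
  markov_numerator M 1 n P -> P = markovP n.
Proof.
case: n => // n hM _ [_]; rewrite -sq_vars3 markov_1n // -mulrA div_expS_1n ?yF_neq0 //.
rewrite subnn add1n subn1 expr0 mul1r !tofracM !tofracXn.
have den0 : yF ^+ n * zF ^+ n.+1 != 0.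
  exact: mulf_neq0 (expf_neq0 _ yF_neq0) (expf_neq0 _ zF_neq0).
by move/(can_inj (divfK den0))/frac_sq_inj.
Qed.

Lemma div_exp_2n (K : fieldType) (x y z a b : K) n : x != 0 -> y != 0 -> z != 0 ->
  ((a * y / (y * z) ^+ n) ^+ 2 + (b * y / (y * z) ^+ n.+1) ^+ 2) / x
  = (y ^+ 2 * z ^+ 2 * a ^+ 2 + b ^+ 2) / (x * y ^+ (n + n) * z ^+ (n + n).+2).
Proof.
move=> x0 y0 z0; rewrite [(y * z) ^+ n.+1]exprSr [(y * z) ^+ n]exprMn [y ^+ (n + n)]exprD.
rewrite [z ^+ (n + n).+2]exprS [z ^+ (n + n).+1]exprS [z ^+ (n + n)]exprD.
move: (expf_neq0 n y0) (expf_neq0 n z0); move: (y ^+ n) (z ^+ n) => Y Z Y0 Z0.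
by field; rewrite x0 y0 z0 Y0 Z0.
Qed.

Lemma markov_numerator_2n M n P : markov_family M -> (2 <= n)%N ->
  markov_numerator M 2 (2 * n - 1) P -> P = v * w * markovP n.-1 ^+ 2 + markovP n ^+ 2.
Proof.
case: n => // d hM d_gt0 [_]; have [_ M01 _ Mrec] := hM.
have -> : M 2%N (2 * d.+1 - 1)%N = (M 1%N d ^+ 2 + M 1%N d.+1 ^+ 2) / M 0%N 1%N.
  have -> : (2 * d.+1 - 1 = 1 + 2 * d)%N by lia.
  apply: (Mrec 0 1 1 d) => //; last by lia.
  by rewrite /in_index coprime1n; case: d d_gt0.
have -> : (2 * d.+1 - 1 - 1 = d + d)%N by lia.
have -> : (2 + (2 * d.+1 - 1) - 1 = (d + d).+2)%N by lia.
rewrite -sq_vars3 !markov_1n // M01 div_exp_2n; [|exact: xF_neq0|exact: yF_neq0|exact: zF_neq0].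
rewrite (_ : (2 - 1 = 1)%N) // 2!tofracM !tofracXn expr1.
have den0 : xF * yF ^+ (d + d) * zF ^+ (d + d).+2 != 0.
  exact: mulf_neq0 (mulf_neq0 xF_neq0 (expf_neq0 _ yF_neq0)) (expf_neq0 _ zF_neq0).
move/(can_inj (divfK den0)).
suff -> : yF ^+ 2 * zF ^+ 2 * frac_sq (markovP d) ^+ 2 + frac_sq (markovP d.+1) ^+ 2
  = frac_sq (v * w * markovP d ^+ 2 + markovP d.+1 ^+ 2) by move/frac_sq_inj => <-.
by rewrite rmorphD 2!rmorphM !rmorphXn /= frac_sq_v frac_sq_w.
Qed.

Theorem theorem4p3 (M : nat -> nat -> RF3) :
  markov_family M ->
  (forall (n : nat) (P : Poly3), (1 <= n)%N ->
     markov_numerator M 1 n P ->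
     uterm 1 P = 'X_i0 *
       \sum_(1 <= k < n.+1) (k%:R : int) *: ('X_i1 ^+ (k - 1) * 'X_i2 ^+ (n - k)))
  /\
  (forall (n : nat) (P : Poly3), (2 <= n)%N ->
     markov_numerator M 2 (2 * n - 1) P ->
     uterm 1 P = 'X_i0 *
       (((2 * n)%N%:R : int) *: 'X_i1 ^+ (2 * n - 1)
        + \sum_(1 <= k < n) ((4 * k)%N%:R : int) *:
              ('X_i1 ^+ (n + k - 1) * 'X_i2 ^+ (n - k)))).
Proof.
move=> hM; split=> n P n_ge hP.
- by rewrite (markov_numerator_1n hM n_ge hP) uterm1_markovP.
- by rewrite (markov_numerator_2n hM n_ge hP) uterm1_markov2 // ltnW.
Qed.
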